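(* Let $l,m,k$ be non-negative integers with $2l\le m\le 2k$. Then $$S(k,m,l)=\sum_{d=0}^{k+l-m}\left[\binom{m}{l}-\binom{m}{l-d-1}\right]\left[\binom{2k-m+1}{k-m+l-d}-\binom{2k-m+1}{k-m+l-d-1}\right].$$
   Context: A Dyck path of semilength $k$ (Dyck $k$-path) is a lattice path in $\mathbb{Z}^2$ starting at $(0,0)$, ending at $(2k,0)$, never going below the $x$-axis, each of whose $2k$ steps is either a rise $(1,1)$ or a fall $(1,-1)$. For a Dyck $k$-path $D$ and non-negative integers $l\le m\le 2k$, $S(D,m,l)$ denotes the number of intervals of length $m$ in $D$ (i.e. blocks of $m$ consecutive steps of $D$, one for each starting position $s\in\{1,\dots,2k-m+1\}$) that contain exactly $l$ falls; and $S(k,m,l)=\sum_{D} S(D,m,l)$, the sum over all Dyck $k$-paths $D$. Convention: $\binom{x}{y}=0$ for integers $x\ge 0$ and $y<0$, and $\binom{x}{y}=0$ if $y>x\ge 0$. *)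

From mathcomp Require Import all_boot all_algebra.
Import GRing.Theory Num.Theory.
Set Implicit Arguments. Unset Strict Implicit. Unset Printing Implicit Defensive.

(* A step is a bool: true = rise (1,1), false = fall (1,-1). *)

Definition height (s : seq bool) : int :=
  \sum_(b <- s) (if b then (1%N)%:Z else - (1%N)%:Z)%R.

Definition is_dyck (s : seq bool) : bool :=
  (height s == 0%R) && all (fun i => (0 <= height (take i s))%R) (iota 0 (size s).+1).

Definition nfalls (s : seq bool) : nat := count negb s.

(* S(D,m,l): number of starting positions s in {1..2k-m+1} (0-based: 0..|D|-m)
   whose block of m consecutive steps contains exactly l falls *)
Definition S_path (D : seq bool) (m l : nat) : nat :=
  count (fun s => nfalls (take m (drop s D)) == l) (iota 0 (size D - m).+1).

Definition S_total (k m l : nat) : nat :=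
  \sum_(t : (2 * k).-tuple bool | is_dyck t) S_path t m l.

Definition binZ (n : nat) (y : int) : int :=
  match y with Posz j => ('C(n, j))%:Z | Negz _ => 0%R end.

From mathcomp Require Import all_boot all_algebra.
From mathcomp Require Import zify ring.
Import GRing.Theory Num.Theory.

(* Cut a Dyck path around its window of m steps containing l falls: a nonnegative
   prefix from height 0 to some height d, the window from d to d + m - 2l, and a
   suffix back to 0.  Summing over the position of the window, the prefix and the
   reversed suffix glue through one extra rise into a single nonnegative path of
   length 2k - m + 1 from 0 to 2d + m - 2l + 1.  The reflection principle counts
   the windows and the glued paths, which gives the two binomial differences of
   the summand indexed by the starting height d of the window. *)

Fixpoint bitseqs (n : nat) : seq (seq bool) :=
  if n is n'.+1 then map (cons true) (bitseqs n') ++ map (cons false) (bitseqs n')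
  else [:: [::]].

Lemma mem_bitseqs n s : (s \in bitseqs n) = (size s == n).
Proof.
have cons_inj (b : bool) : injective (cons b) by move=> x y [].
elim: n s => [|n IH] s; first by rewrite mem_seq1 size_eq0.
rewrite [bitseqs _]/= mem_cat; case: s => [|b s].
  by apply/negbTE/orP => -[] /mapP [].
rewrite [size _]/= eqSS -IH; case: b; rewrite (mem_map (cons_inj _)).
  by case: (s \in bitseqs n); rewrite ?orbF //; apply/negbTE/mapP => -[].
by case: (s \in bitseqs n); rewrite ?orbT ?orbF //; apply/negbTE/mapP => -[].
Qed.

Lemma bitseqs_uniq n : uniq (bitseqs n).
Proof.
elim: n => [|n IH] //=; rewrite cat_uniq !map_inj_uniq ?IH //=; try by move=> x y [].
by rewrite andbT; apply/hasPn => _ /mapP [y _ ->]; apply/mapP => -[].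
Qed.

Lemma big_tuple_bitseqs n (P : pred (seq bool)) (F : seq bool -> nat) :
  \sum_(t : n.-tuple bool | P t) F t = \sum_(s <- bitseqs n | P s) F s.
Proof.
have tuples : perm_eq (bitseqs n) [seq val t | t : n.-tuple bool].
  apply: uniq_perm; rewrite ?bitseqs_uniq ?(map_inj_uniq val_inj) ?enum_uniq //.
  move=> s; rewrite mem_bitseqs; apply/idP/mapP => [sz_s | [t _ ->]].
    by exists (Tuple sz_s); rewrite ?mem_enum.
  by rewrite size_tuple.
by rewrite (perm_big _ tuples) big_image_cond.
Qed.

Lemma big_bitseqs_cat p q (F : seq bool -> nat) :
  \sum_(s <- bitseqs (p + q)) F s =
  \sum_(x <- bitseqs p) \sum_(y <- bitseqs q) F (x ++ y).
Proof.
by elim: p F => [|p IH] F /=; rewrite ?big_seq1 // !big_cat !big_map !IH.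
Qed.

(* Final height of the path [s] started at height [a], or [None] if it goes
   below the axis. *)
Fixpoint walk (a : nat) (s : seq bool) : option nat :=
  match s with
  | [::] => Some a
  | b :: s' => if b then walk a.+1 s' else if a is a'.+1 then walk a' s' else None
  end.

Lemma walk_cat a x y :
  walk a (x ++ y) = if walk a x is Some h then walk h y else None.
Proof. by elim: x a => [|[] x IH] [|a] //=. Qed.

Lemma walk_nfalls a s b : walk a s = Some b -> (a + size s = b + 2 * nfalls s)%N.
Proof.
rewrite /nfalls; elim: s a => [|c s IH] a /=; first by move=> [->]; rewrite addn0.
by case: c a => [|] [|a] // /IH /=; lia.
Qed.

Lemma height_nil : height [::] = 0%R.
Proof. by rewrite /height big_nil. Qed.

Lemma height_cons b s : height (b :: s) = ((if b then 1 else -1) + height s)%R.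
Proof. by rewrite /height big_cons. Qed.

Lemma walk_height a s b : walk a s = Some b -> (a%:Z + height s)%R = b.
Proof.
elim: s a => [|c s IH] a /=; first by move=> [->]; rewrite height_nil addr0.
by rewrite height_cons; case: c a => [|] [|a] // /IH; lia.
Qed.

Lemma walk_prefixes a s :
  all (fun i => 0 <= a%:Z + height (take i s))%R (iota 0 (size s).+1)
  = (walk a s != None).
Proof.
elim: s a => [|c s IH] a; first by rewrite /= height_nil addr0 andbT.
have -> : iota 0 (size (c :: s)).+1 = 0 :: map (addn 1) (iota 0 (size s).+1).
  by rewrite -iotaDl.
have all_cons (f : pred nat) r : all f (0 :: r) = f 0 && all f r by [].
rewrite all_cons all_map take0 height_nil addr0.
rewrite (_ : 0 <= a%:Z)%R // andTb.
case: c; last case: a => [|a].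
- rewrite [walk _ _]/= -IH; apply: eq_all => i; rewrite /= add0n height_cons; lia.
- by rewrite /= take0 height_cons height_nil.
- rewrite [walk _ _]/= -IH; apply: eq_all => i; rewrite /= add0n height_cons; lia.
Qed.

Lemma is_dyckE s : is_dyck s = (walk 0 s == Some 0).
Proof.
have := walk_prefixes 0 s; under eq_all do rewrite add0r; rewrite /is_dyck => ->.
case E: (walk 0 s) => [b|]; last by rewrite andbF.
by move/walk_height: E; rewrite add0r => ->; rewrite andbT.
Qed.

Fixpoint walks (N a b : nat) : nat :=
  if N is N'.+1 then walks N' a.+1 b + (if a is a'.+1 then walks N' a' b else 0)
  else a == b.

Lemma walksSr N a b :
  walks N.+1 a b = (if b is b'.+1 then walks N a b' else 0) + walks N a b.+1.
Proof.
elim: N a b => [|N IH] a b; first by case: a b => [|a] [|b] //=; rewrite ?eqSS ?addn0.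
have -> : walks N.+2 a b =
  walks N.+1 a.+1 b + (if a is a'.+1 then walks N.+1 a' b else 0) by [].
rewrite IH.
by case: a => [|a]; [rewrite addn0 | rewrite IH]; case: b => [|b] /=; lia.
Qed.

Lemma walks_sym N a b : walks N a b = walks N b a.
Proof.
elim: N a b => [|N IH] a b; first by rewrite /= eq_sym.
rewrite [RHS]walksSr /= (IH a.+1 b).
by case: a => [|a]; rewrite ?(IH a b) addnC.
Qed.

Lemma walks_unreachable N a b : (a + N < b)%N -> walks N a b = 0.
Proof.
elim: N a b => [|N IH] a b /= ltb; first by case: eqP ltb => // ->; rewrite addn0 ltnn.
rewrite IH; last lia.
by case: a ltb => // a ltb; rewrite IH //; lia.
Qed.

(* Split at the last visit to height h: what follows is a rise and then a path
   staying above h. *)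
Lemma walks_conv N h e :
  walks N.+1 0 (h + e + 1) = \sum_(0 <= p < N.+1) walks p 0 h * walks (N - p) 0 e.
Proof.
elim: N e => [|N IH] e.
  by rewrite big_nat1 /= addn0 addn1; case: h => [|h]; case: e.
rewrite addn1 [LHS]walksSr big_nat_recr // subnn (eq_big_nat _ _ (F2 := fun p =>
    walks p 0 h * (if e is e'.+1 then walks (N - p) 0 e' else 0) +
    walks p 0 h * walks (N - p) 0 e.+1)); last first.
  by move=> p /andP[_ ltpN]; rewrite subSn // walksSr mulnDr.
rewrite big_split /= -(IH e.+1) (_ : (h + e).+2 = h + e.+1 + 1); last lia.
case: e => [|e].
  by rewrite big1 => [|p _]; rewrite /= ?addn0 ?muln0 //; lia.
by rewrite -IH /= !addn0 muln0 !addn1 !addnS addn0.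
Qed.

Lemma big_nat_mul_eq (F : nat -> nat) c M : (c < M)%N ->
  \sum_(0 <= h < M) F h * (h == c) = F c.
Proof.
move=> ltcM; rewrite (bigD1_seq c) ?mem_index_iota ?iota_uniq //= eqxx muln1.
by rewrite big1 ?addn0 // => h /negPf ->; rewrite muln0.
Qed.

Lemma big_walk N a M (g : nat -> nat) : (N + a < M)%N ->
  \sum_(x <- bitseqs N) (if walk a x is Some h then g h else 0) =
  \sum_(0 <= h < M) walks N a h * g h.
Proof.
elim: N a => [|N IH] a ltM.
  rewrite big_seq1 /= -(@big_nat_mul_eq g a M ltM).
  by apply: eq_bigr => h _; rewrite eq_sym mulnC.
rewrite /= big_cat !big_map /= IH; last lia.
rewrite (_ : \sum_(x <- bitseqs N) _ =
             \sum_(0 <= h < M) (if a is a'.+1 then walks N a' h else 0) * g h).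
  by rewrite -big_split; apply: eq_bigr => h _; rewrite mulnDl.
case: a ltM => [|a] ltM; last by rewrite IH //; lia.
by rewrite !big1.
Qed.

Lemma sum_walk_eq N a b :
  \sum_(x <- bitseqs N) (walk a x == Some b : nat) = walks N a b.
Proof.
rewrite -(@big_nat_mul_eq (walks N a) b (N + a + b).+1); last lia.
rewrite -(@big_walk N a _ (fun h => (h == b) : nat)); last lia.
by apply: eq_bigr => x _; case: (walk a x).
Qed.

Section Window.

Variables (m l : nat).
Hypothesis le_2l_m : (2 * l <= m)%N.
Let r := m - 2 * l.

Lemma sum_window_walk h q :
  \sum_(y <- bitseqs m) \sum_(z <- bitseqs q)
     ((walk h (y ++ z) == Some 0) && (nfalls y == l) : nat)
  = walks m h (h + r) * walks q (h + r) 0.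
Proof.
transitivity (\sum_(y <- bitseqs m)
    (if walk h y is Some h' then (h' == h + r) * walks q h' 0 else 0)).
  apply: eq_big_seq => y; rewrite mem_bitseqs => /eqP sz_y.
  under eq_bigr do rewrite walk_cat.
  case E: (walk h y) => [h'|]; last by rewrite big1.
  have := walk_nfalls _ _ _ E; rewrite sz_y => size_y.
  rewrite (_ : (nfalls y == l) = (h' == h + r)); last by apply/eqP/eqP; lia.
  case: eqP => _; last by rewrite big1 // => z _; rewrite andbF.
  by rewrite mul1n -sum_walk_eq; apply: eq_bigr => z _; rewrite andbT.
rewrite (@big_walk m h (m + h).+1 (fun h' => (h' == h + r) * walks q h' 0)); last lia.
rewrite -(@big_nat_mul_eq (fun h' => walks m h h' * walks q h' 0) (h + r) (m + h).+1);
  last lia.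
by apply: eq_bigr => h' _; rewrite mulnCA mulnC.
Qed.

Lemma sum_dyck_window n p q : n = p + (m + q) ->
  \sum_(s <- bitseqs n) ((walk 0 s == Some 0) && (nfalls (take m (drop p s)) == l) : nat)
  = \sum_(0 <= h < n.+1) walks p 0 h * (walks m h (h + r) * walks q (h + r) 0).
Proof.
move=> ->; rewrite big_bitseqs_cat.
rewrite -(@big_walk p 0 _ (fun h => walks m h (h + r) * walks q (h + r) 0)); last lia.
apply: eq_big_seq => x; rewrite mem_bitseqs => /eqP sz_x.
rewrite big_bitseqs_cat.
case E: (walk 0 x) => [h|].
  rewrite -sum_window_walk; apply: eq_big_seq => y; rewrite mem_bitseqs => /eqP sz_y.
  by apply: eq_bigr => z _; rewrite drop_size_cat // take_size_cat // walk_cat E.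
by rewrite big1 // => y _; rewrite big1 // => z _; rewrite walk_cat E.
Qed.

End Window.

Lemma S_total_walks k m l : (2 * l <= m)%N -> (m <= 2 * k)%N ->
  S_total k m l = \sum_(0 <= h < (2 * k).+1)
     walks m h (h + (m - 2 * l)) * walks (2 * k - m).+1 0 (h + (h + (m - 2 * l)) + 1).
Proof.
move=> le_2l_m le_m_2k.
rewrite /S_total (big_tuple_bitseqs _ is_dyck (fun s => S_path s m l)).
set n := 2 * k; set r := m - 2 * l.
transitivity (\sum_(s <- bitseqs n) \sum_(0 <= p < (n - m).+1)
     ((walk 0 s == Some 0) && (nfalls (take m (drop p s)) == l) : nat)).
  rewrite big_mkcond; apply: eq_big_seq => s; rewrite mem_bitseqs => /eqP sz_s.
  rewrite is_dyckE /S_path -sum1_count big_mkcond sz_s /index_iota subn0.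
  by case: (walk 0 s == Some 0) => //=; rewrite big1.
rewrite exchange_big (eq_big_nat _ _ (F2 := fun p => \sum_(0 <= h < n.+1)
   walks p 0 h * (walks m h (h + r) * walks (n - m - p) (h + r) 0))); last first.
  by move=> p /andP[_ le_p]; apply: sum_dyck_window => //; lia.
rewrite exchange_big; apply: eq_bigr => h _.
rewrite walks_conv big_distrr; apply: eq_bigr => p _.
by rewrite (walks_sym _ (h + r) 0) mulnCA.
Qed.

Local Open Scope ring_scope.

Lemma binZ_lt0 N (y : int) : y < 0 -> binZ N y = 0.
Proof. by case: y. Qed.

Lemma binZS N (y : int) : binZ N.+1 y = binZ N y + binZ N (y - 1).
Proof.
case: y => [[|j]|j]; last by rewrite !binZ_lt0 //; lia.
  by rewrite (@binZ_lt0 N (0 - 1)) // addr0 /= !bin0.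
by rewrite (_ : j.+1%:Z - 1 = j); [rewrite /= binS PoszD addrC | lia].
Qed.

(* Reflection principle: of the C(N, f) unconstrained paths with f falls, those
   reaching height -1 correspond, by reflecting their initial segment, to the
   paths starting at -a-2, which have f - a - 1 falls. *)
Lemma walks_reflection N a b f : (a + N = b + 2 * f)%N ->
  (walks N a b)%:Z = binZ N f - binZ N (f%:Z - a%:Z - 1).
Proof.
elim: N a b f => [|N IH] a b f H.
  rewrite addn0 in H; subst a; case: f => [|f].
    by rewrite muln0 addn0 /= eqxx binZ_lt0 //; lia.
  rewrite (@binZ_lt0 0 (_ - _ - 1)); last lia.
  by rewrite /= bin0n subr0; case: eqP => //; lia.
have -> : walks N.+1 a b = (walks N a.+1 b + if a is a'.+1 then walks N a' b else 0)%N
  by [].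
rewrite PoszD (IH a.+1 b f); last lia.
case: a H => [|a] H.
  rewrite !binZS /= (_ : f%:Z - 1%:Z - 1 = f%:Z - 1 - 1); last lia.
  by rewrite (_ : f%:Z - 0%:Z - 1 = f%:Z - 1); [ring | lia].
case: f H => [|f] H.
  rewrite walks_unreachable; last lia.
  rewrite (@binZ_lt0 N (_ - _ - 1)) ?(@binZ_lt0 N.+1 (_ - _ - 1)); try lia.
  by rewrite /= !bin0.
rewrite (IH a b f); last lia.
rewrite !binZS (_ : f.+1%:Z - a.+2%:Z - 1 = f.+1%:Z - a.+1%:Z - 1 - 1); last lia.
rewrite (_ : f%:Z - a%:Z - 1 = f.+1%:Z - a.+1%:Z - 1); last lia.
rewrite (_ : Posz f = f.+1%:Z - 1); last lia.
ring.
Qed.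

Theorem theorem1 (k m l : nat) :
  (2 * l <= m)%N -> (m <= 2 * k)%N ->
  (S_total k m l)%:Z =
  \sum_(0 <= d < (k + l - m).+1 | (m <= k + l)%N)
    (binZ m l%:Z - binZ m (l%:Z - d%:Z - 1))
    * (binZ (2 * k - m).+1 (k%:Z - m%:Z + l%:Z - d%:Z)
       - binZ (2 * k - m).+1 (k%:Z - m%:Z + l%:Z - d%:Z - 1)).
Proof.
move=> le_2l_m le_m_2k.
have suffix_too_high h : (k + l < m + h)%N ->
    walks (2 * k - m).+1 0 (h + (h + (m - 2 * l)) + 1) = 0%N.
  by move=> lt_h; rewrite walks_unreachable //; lia.
rewrite S_total_walks // (big_morph Posz PoszD (erefl (Posz 0%N))).
have [le_m_kl | lt_kl_m] := leqP m (k + l); last first.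
  by rewrite [RHS]big_pred0 // big1 // => h _; rewrite suffix_too_high ?muln0 //; lia.
rewrite (big_cat_nat _ (n := (k + l - m).+1)) //; last lia.
rewrite -[RHS]addr0; congr (_ + _); last first.
  rewrite big1_seq // => h /andP[_].
  by rewrite mem_index_iota => /andP[lt_h _]; rewrite suffix_too_high ?muln0 //; lia.
apply: eq_big_nat => h /andP [_ le_h].
rewrite PoszM (@walks_reflection m h _ l); last lia.
rewrite (@walks_reflection _ 0 _ (k + l - m - h)); last lia.
by rewrite (_ : Posz (k + l - m - h)%N = k%:Z - m%:Z + l%:Z - h%:Z) ?subr0 //; lia.
Qed.
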